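(* Let $(\mathsf{T}, \mu, \eta, \mathsf{n}, \mathsf{n}_{K})$ be a symmetric comonoidal monad and $(!, \delta, \varepsilon, \Delta, \mathsf{e}, \mathsf{m},\mathsf{m}_K)$ be a monoidal coalgebra modality on the same symmetric monoidal category $(\mathbb{X}, \otimes, K)$. Then the following are in bijective correspondence: (1) Symmetric monoidal mixed distributive laws of $(\mathsf{T}, \mu, \eta, \mathsf{n}, \mathsf{n}_{K})$ over $(!, \delta, \varepsilon, \mathsf{m},\mathsf{m}_K)$; (2) Liftings of the monoidal coalgebra modality to $(\mathbb{X}^\mathsf{T}, \otimes^{\mathsf{n}}, (K,\mathsf{n}_K))$, that is, monoidal coalgebra modalities $(\tilde{!}, \tilde{\delta}, \tilde{\varepsilon}, \tilde{\Delta}, \tilde{\mathsf{e}}, \tilde{\mathsf{m}}, \tilde{\mathsf{m}}_{(K, \mathsf{n}_K)})$ on $(\mathbb{X}^\mathsf{T}, \otimes^{\mathsf{n}}, (K,\mathsf{n}_K))$ with $\mathsf{U}^\mathsf{T}\tilde{!}=!\,\mathsf{U}^\mathsf{T}$ whose structure maps are mapped by the forgetful functor $\mathsf{U}^\mathsf{T}$ to $\delta_A,\varepsilon_A,\Delta_A,\mathsf{e}_A,\mathsf{m}_{A,B},\mathsf{m}_K$ respectively; (3) Liftings of the symmetric comonoidal monad $(\mathsf{T}, \mu, \eta, \mathsf{n}, \mathsf{n}_{K})$ to $(\mathbb{X}^!, \otimes^\mathsf{m}, (K, \mathsf{m}_K))$, that is, symmetric comonoidal monads on $\mathbb{X}^!$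 with underlying functor commuting with the forgetful functor $\mathsf{U}^!$ and whose structure maps are mapped by $\mathsf{U}^!$ to $\mu_A,\eta_A,\mathsf{n}_{A,B},\mathsf{n}_K$.
   Context: Composition is in diagrammatic order; $\tau$ is the canonical interchange $(A\otimes B)\otimes(C\otimes D)\to(A\otimes C)\otimes(B\otimes D)$. A symmetric comonoidal monad $(\mathsf{T},\mu,\eta,\mathsf{n},\mathsf{n}_K)$ is a monad with symmetric oplax monoidal structure $\mathsf{n}_{A,B}:\mathsf{T}(A\otimes B)\to\mathsf{T}(A)\otimes\mathsf{T}(B)$, $\mathsf{n}_K:\mathsf{T}(K)\to K$ compatible with $\mu,\eta$; $\mathbb{X}^\mathsf{T}$ is symmetric monoidal via $(A,\nu)\otimes^\mathsf{n}(B,\nu')=(A\otimes B,\mathsf{n}_{A,B};(\nu\otimes\nu'))$, unit $(K,\mathsf{n}_K)$. A monoidal coalgebra modality $(!,\delta,\varepsilon,\Delta,\mathsf{e},\mathsf{m},\mathsf{m}_K)$ is a symmetric monoidal comonad $(!,\delta,\varepsilon,\mathsf{m},\mathsf{m}_K)$ (lax monoidal $\mathsf{m}_{A,B}:!(A)\otimes!(B)\to!(A\otimes B)$, $\mathsf{m}_K:K\to!(K)$ with $\delta,\varepsilon$ monoidal) which is also a coalgebra modality (natural cocommutative comonoids $(!(A),\Delta_A,\mathsf{e}_A)$ with $\delta_A$ a comonoid morphism) such that $\Delta$, $\mathsf{e}$ are monoidal transformations, i.e. $\mathsf{m}_{A,B};\Delta_{A\otimes B}=(\Delta_A\otimes\Delta_B);\tau;(\mathsf{m}_{A,B}\otimes\mathsf{m}_{A,B})$,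 $\mathsf{m}_{A,B};\mathsf{e}_{A\otimes B}=(\mathsf{e}_A\otimes\mathsf{e}_B);\ell_K$, $\mathsf{m}_K;\Delta_K=\ell^{-1}_K;(\mathsf{m}_K\otimes\mathsf{m}_K)$, $\mathsf{m}_K;\mathsf{e}_K=1_K$, and are coalgebra morphisms: $\delta_A;!(\Delta_A)=\Delta_A;(\delta_A\otimes\delta_A);\mathsf{m}_{!(A),!(A)}$, $\delta_A;!(\mathsf{e}_A)=\mathsf{e}_A;\mathsf{m}_K$. $\mathbb{X}^!$ is the category of $!$-coalgebras with $(A,\omega)\otimes^\mathsf{m}(B,\omega')=(A\otimes B,(\omega\otimes\omega');\mathsf{m}_{A,B})$, unit $(K,\mathsf{m}_K)$. A symmetric monoidal mixed distributive law is a natural $\lambda_A:\mathsf{T}!(A)\to!\mathsf{T}(A)$ with $\mu_{!(A)};\lambda_A=\mathsf{T}(\lambda_A);\lambda_{\mathsf{T}(A)};!(\mu_A)$, $\eta_{!(A)};\lambda_A=!(\eta_A)$, $\mathsf{T}(\delta_A);\lambda_{!(A)};!(\lambda_A)=\lambda_A;\delta_{\mathsf{T}(A)}$, $\lambda_A;\varepsilon_{\mathsf{T}(A)}=\mathsf{T}(\varepsilon_A)$, $\mathsf{n}_{!(A),!(B)};(\lambda_A\otimes\lambda_B);\mathsf{m}_{\mathsf{T}(A),\mathsf{T}(B)}=\mathsf{T}(\mathsf{m}_{A,B});\lambda_{A\otimes B};!(\mathsf{n}_{A,B})$, $\mathsf{n}_K;\mathsf{m}_K=\mathsf{T}(\mathsf{m}_K);\lambda_K;!(\mathsf{n}_K)$.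 *)

(* Composition is written in DIAGRAMMATIC order:  f ;; g  = "first f, then g".
   Equality of morphisms is Leibniz equality in the hom-types. *)


Record Cat : Type := MkCat {
  ob :> Type;
  hom : ob -> ob -> Type;
  idm : forall A : ob, hom A A;
  comp : forall A B D : ob, hom A B -> hom B D -> hom A D
}.
Arguments hom {c} _ _.
Arguments idm {c} A.
Arguments comp {c A B D} _ _.

Notation "f ;; g" := (comp f g) (at level 50, left associativity).

Class IsCat (C : Cat) : Prop := {
  comp_id_l : forall (A B : C) (f : hom A B), idm A ;; f = f;
  comp_id_r : forall (A B : C) (f : hom A B), f ;; idm B = f;
  comp_assoc : forall (A B D E : C) (f : hom A B) (g : hom B D) (h : hom D E),
      (f ;; g) ;; h = f ;; (g ;; h)
}.

Class MonData (C : Cat) : Type := {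
  ten : C -> C -> C;
  tenm : forall A B A' B' : C, hom A A' -> hom B B' -> hom (ten A B) (ten A' B');
  unitK : C;
  alpha : forall A B D : C, hom (ten (ten A B) D) (ten A (ten B D));
  alphai : forall A B D : C, hom (ten A (ten B D)) (ten (ten A B) D);
  lam : forall A : C, hom (ten unitK A) A;
  lami : forall A : C, hom A (ten unitK A);
  rho : forall A : C, hom (ten A unitK) A;
  rhoi : forall A : C, hom A (ten A unitK);
  sig : forall A B : C, hom (ten A B) (ten B A)
}.
Arguments ten {C MonData} _ _.
Arguments tenm {C MonData A B A' B'} _ _.
Arguments unitK {C MonData}.
Arguments alpha {C MonData} A B D.
Arguments alphai {C MonData} A B D.
Arguments lam {C MonData} A.
Arguments lami {C MonData} A.
Arguments rho {C MonData} A.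
Arguments rhoi {C MonData} A.
Arguments sig {C MonData} A B.

Notation "A ⊗ B" := (ten A B) (at level 40, left associativity).
Notation "f ⊗m g" := (tenm f g) (at level 40, left associativity).

Class IsSMC (C : Cat) (M : MonData C) : Prop := {
  tenm_id : forall A B : C, idm A ⊗m idm B = idm (A ⊗ B);
  tenm_comp : forall (A1 A2 A3 B1 B2 B3 : C) (f : hom A1 A2) (f' : hom A2 A3)
      (g : hom B1 B2) (g' : hom B2 B3),
      (f ;; f') ⊗m (g ;; g') = (f ⊗m g) ;; (f' ⊗m g');
  alpha_nat : forall (A A' B B' D D' : C) (f : hom A A') (g : hom B B') (h : hom D D'),
      ((f ⊗m g) ⊗m h) ;; alpha A' B' D' = alpha A B D ;; (f ⊗m (g ⊗m h));
  alpha_iso1 : forall A B D : C, alpha A B D ;; alphai A B D = idm _;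
  alpha_iso2 : forall A B D : C, alphai A B D ;; alpha A B D = idm _;
  lam_nat : forall (A A' : C) (f : hom A A'), (idm unitK ⊗m f) ;; lam A' = lam A ;; f;
  lam_iso1 : forall A : C, lam A ;; lami A = idm _;
  lam_iso2 : forall A : C, lami A ;; lam A = idm _;
  rho_nat : forall (A A' : C) (f : hom A A'), (f ⊗m idm unitK) ;; rho A' = rho A ;; f;
  rho_iso1 : forall A : C, rho A ;; rhoi A = idm _;
  rho_iso2 : forall A : C, rhoi A ;; rho A = idm _;
  sig_nat : forall (A A' B B' : C) (f : hom A A') (g : hom B B'),
      (f ⊗m g) ;; sig A' B' = sig A B ;; (g ⊗m f);
  sig_inv : forall A B : C, sig A B ;; sig B A = idm _;
  pentagon : forall A B D E : C,
      (alpha A B D ⊗m idm E) ;; alpha A (B ⊗ D) E ;; (idm A ⊗m alpha B D E)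
      = alpha (A ⊗ B) D E ;; alpha A B (D ⊗ E);
  triangle : forall A B : C,
      alpha A unitK B ;; (idm A ⊗m lam B) = rho A ⊗m idm B;
  hexagon : forall A B D : C,
      alpha A B D ;; sig A (B ⊗ D) ;; alpha B D A
      = (sig A B ⊗m idm D) ;; alpha B A D ;; (idm B ⊗m sig A D)
}.

Definition tau {C : Cat} {M : MonData C} (A B D E : C)
  : hom ((A ⊗ B) ⊗ (D ⊗ E)) ((A ⊗ D) ⊗ (B ⊗ E)) :=
  alpha A B (D ⊗ E) ;; (idm A ⊗m alphai B D E) ;; (idm A ⊗m (sig B D ⊗m idm E))
  ;; (idm A ⊗m alpha D B E) ;; alphai A D (B ⊗ E).

Record Functor (C : Cat) : Type := MkFunctor {
  fo : C -> C;
  fm : forall A B : C, hom A B -> hom (fo A) (fo B)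
}.
Arguments fo {C} _ _.
Arguments fm {C} _ {A B} _.

Definition IsFunctor {C : Cat} (F : Functor C) : Prop :=
  (forall A : C, fm F (idm A) = idm (fo F A)) /\
  (forall (A B D : C) (f : hom A B) (g : hom B D), fm F (f ;; g) = fm F f ;; fm F g).

Record CMonad (C : Cat) (M : MonData C) : Type := MkCMonad {
  cT : Functor C;
  cmu : forall A : C, hom (fo cT (fo cT A)) (fo cT A);
  ceta : forall A : C, hom A (fo cT A);
  cn : forall A B : C, hom (fo cT (A ⊗ B)) (fo cT A ⊗ fo cT B);
  cnK : hom (fo cT unitK) unitK
}.
Arguments cT {C M} _.
Arguments cmu {C M} _ A.
Arguments ceta {C M} _ A.
Arguments cn {C M} _ A B.
Arguments cnK {C M} _.

Class IsSymComonoidalMonad (C : Cat) (M : MonData C) (T : CMonad C M) : Prop := {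
  scm_functor : IsFunctor (cT T);
  mu_nat : forall (A B : C) (f : hom A B),
      fm (cT T) (fm (cT T) f) ;; cmu T B = cmu T A ;; fm (cT T) f;
  eta_nat : forall (A B : C) (f : hom A B), f ;; ceta T B = ceta T A ;; fm (cT T) f;
  mu_assoc : forall A : C, fm (cT T) (cmu T A) ;; cmu T A = cmu T (fo (cT T) A) ;; cmu T A;
  mu_eta_l : forall A : C, ceta T (fo (cT T) A) ;; cmu T A = idm _;
  mu_eta_r : forall A : C, fm (cT T) (ceta T A) ;; cmu T A = idm _;
  n_nat : forall (A A' B B' : C) (f : hom A A') (g : hom B B'),
      fm (cT T) (f ⊗m g) ;; cn T A' B' = cn T A B ;; (fm (cT T) f ⊗m fm (cT T) g);
  n_assoc : forall A B D : C,
      fm (cT T) (alpha A B D) ;; cn T A (B ⊗ D) ;; (idm _ ⊗m cn T B D)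
      = cn T (A ⊗ B) D ;; (cn T A B ⊗m idm _) ;; alpha _ _ _;
  n_unit_l : forall A : C,
      cn T unitK A ;; (cnK T ⊗m idm _) ;; lam _ = fm (cT T) (lam A);
  n_unit_r : forall A : C,
      cn T A unitK ;; (idm _ ⊗m cnK T) ;; rho _ = fm (cT T) (rho A);
  n_sym : forall A B : C, fm (cT T) (sig A B) ;; cn T B A = cn T A B ;; sig _ _;
  mu_n : forall A B : C,
      cmu T (A ⊗ B) ;; cn T A B
      = fm (cT T) (cn T A B) ;; cn T _ _ ;; (cmu T A ⊗m cmu T B);
  mu_nK : cmu T unitK ;; cnK T = fm (cT T) (cnK T) ;; cnK T;
  eta_n : forall A B : C, ceta T (A ⊗ B) ;; cn T A B = ceta T A ⊗m ceta T B;
  eta_nK : ceta T unitK ;; cnK T = idm unitK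
}.

Record MCM (C : Cat) (M : MonData C) : Type := MkMCM {
  bang : Functor C;
  del : forall A : C, hom (fo bang A) (fo bang (fo bang A));
  eps : forall A : C, hom (fo bang A) A;
  dup : forall A : C, hom (fo bang A) (fo bang A ⊗ fo bang A);
  er : forall A : C, hom (fo bang A) unitK;
  mm : forall A B : C, hom (fo bang A ⊗ fo bang B) (fo bang (A ⊗ B));
  mK : hom unitK (fo bang unitK)
}.
Arguments bang {C M} _.
Arguments del {C M} _ A.
Arguments eps {C M} _ A.
Arguments dup {C M} _ A.
Arguments er {C M} _ A.
Arguments mm {C M} _ A B.
Arguments mK {C M} _.

Class IsMCM (C : Cat) (M : MonData C) (Bg : MCM C M) : Prop := {
  mcm_functor : IsFunctor (bang Bg);
  del_nat : forall (A B : C) (f : hom A B),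
      fm (bang Bg) f ;; del Bg B = del Bg A ;; fm (bang Bg) (fm (bang Bg) f);
  eps_nat : forall (A B : C) (f : hom A B), fm (bang Bg) f ;; eps Bg B = eps Bg A ;; f;
  del_coassoc : forall A : C,
      del Bg A ;; del Bg (fo (bang Bg) A) = del Bg A ;; fm (bang Bg) (del Bg A);
  del_eps_l : forall A : C, del Bg A ;; eps Bg (fo (bang Bg) A) = idm _;
  del_eps_r : forall A : C, del Bg A ;; fm (bang Bg) (eps Bg A) = idm _;
  m_nat : forall (A A' B B' : C) (f : hom A A') (g : hom B B'),
      (fm (bang Bg) f ⊗m fm (bang Bg) g) ;; mm Bg A' B' = mm Bg A B ;; fm (bang Bg) (f ⊗m g);
  m_assoc : forall A B D : C,
      (mm Bg A B ⊗m idm _) ;; mm Bg (A ⊗ B) D ;; fm (bang Bg) (alpha A B D)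
      = alpha _ _ _ ;; (idm _ ⊗m mm Bg B D) ;; mm Bg A (B ⊗ D);
  m_unit_l : forall A : C,
      (mK Bg ⊗m idm _) ;; mm Bg unitK A ;; fm (bang Bg) (lam A) = lam _;
  m_unit_r : forall A : C,
      (idm _ ⊗m mK Bg) ;; mm Bg A unitK ;; fm (bang Bg) (rho A) = rho _;
  m_sym : forall A B : C, mm Bg A B ;; fm (bang Bg) (sig A B) = sig _ _ ;; mm Bg B A;
  m_del : forall A B : C,
      mm Bg A B ;; del Bg (A ⊗ B)
      = (del Bg A ⊗m del Bg B) ;; mm Bg _ _ ;; fm (bang Bg) (mm Bg A B);
  mK_del : mK Bg ;; del Bg unitK = mK Bg ;; fm (bang Bg) (mK Bg);
  m_eps : forall A B : C, mm Bg A B ;; eps Bg (A ⊗ B) = eps Bg A ⊗m eps Bg B;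
  mK_eps : mK Bg ;; eps Bg unitK = idm unitK;
  dup_nat : forall (A B : C) (f : hom A B),
      fm (bang Bg) f ;; dup Bg B = dup Bg A ;; (fm (bang Bg) f ⊗m fm (bang Bg) f);
  er_nat : forall (A B : C) (f : hom A B), fm (bang Bg) f ;; er Bg B = er Bg A;
  dup_coassoc : forall A : C,
      dup Bg A ;; (dup Bg A ⊗m idm _) ;; alpha _ _ _ = dup Bg A ;; (idm _ ⊗m dup Bg A);
  dup_counit_l : forall A : C, dup Bg A ;; (er Bg A ⊗m idm _) ;; lam _ = idm _;
  dup_counit_r : forall A : C, dup Bg A ;; (idm _ ⊗m er Bg A) ;; rho _ = idm _;
  dup_cocomm : forall A : C, dup Bg A ;; sig _ _ = dup Bg A;
  del_dup : forall A : C, del Bg A ;; dup Bg (fo (bang Bg) A) = dup Bg A ;; (del Bg A ⊗m del Bg A);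
  del_er : forall A : C, del Bg A ;; er Bg (fo (bang Bg) A) = er Bg A;
  m_dup : forall A B : C,
      mm Bg A B ;; dup Bg (A ⊗ B)
      = (dup Bg A ⊗m dup Bg B) ;; tau _ _ _ _ ;; (mm Bg A B ⊗m mm Bg A B);
  m_er : forall A B : C, mm Bg A B ;; er Bg (A ⊗ B) = (er Bg A ⊗m er Bg B) ;; lam unitK;
  mK_dup : mK Bg ;; dup Bg unitK = lami unitK ;; (mK Bg ⊗m mK Bg);
  mK_er : mK Bg ;; er Bg unitK = idm unitK;
  dup_coalg : forall A : C,
      del Bg A ;; fm (bang Bg) (dup Bg A)
      = dup Bg A ;; (del Bg A ⊗m del Bg A) ;; mm Bg _ _;
  er_coalg : forall A : C, del Bg A ;; fm (bang Bg) (er Bg A) = er Bg A ;; mK Bg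
}.

Section Algebras.
Context {C : Cat} {M : MonData C} (T : CMonad C M) (Bg : MCM C M).

Local Notation "'T0' A" := (fo (cT T) A) (at level 10).
Local Notation "'T1' f" := (fm (cT T) f) (at level 10).
Local Notation "'B0' A" := (fo (bang Bg) A) (at level 10).
Local Notation "'B1' f" := (fm (bang Bg) f) (at level 10).

Definition is_alg (A : C) (nu : hom (T0 A) A) : Prop :=
  ceta T A ;; nu = idm A /\ T1 nu ;; nu = cmu T A ;; nu.
Arguments is_alg {A} nu.

Definition Alg (A : C) : Type := { nu : hom (T0 A) A | is_alg nu }.

Definition alg_mor (A B : C) (nu : hom (T0 A) A) (nu' : hom (T0 B) B) (f : hom A B) : Prop :=
  T1 f ;; nu' = nu ;; f.
Arguments alg_mor {A B} nu nu' f.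

Definition is_coalg (A : C) (om : hom A (B0 A)) : Prop :=
  om ;; eps Bg A = idm A /\ om ;; del Bg A = om ;; B1 om.
Arguments is_coalg {A} om.

Definition Coalg (A : C) : Type := { om : hom A (B0 A) | is_coalg om }.

Definition coalg_mor (A B : C) (om : hom A (B0 A)) (om' : hom B (B0 B)) (f : hom A B) : Prop :=
  f ;; om' = om ;; B1 f.
Arguments coalg_mor {A B} om om' f.

Record DistLaw : Type := MkDistLaw {
  dl : forall A : C, hom (T0 (B0 A)) (B0 (T0 A));
  dl_nat : forall (A B : C) (f : hom A B), T1 (B1 f) ;; dl B = dl A ;; B1 (T1 f);
  dl_mu : forall A : C, cmu T (B0 A) ;; dl A = T1 (dl A) ;; dl (T0 A) ;; B1 (cmu T A);
  dl_eta : forall A : C, ceta T (B0 A) ;; dl A = B1 (ceta T A);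
  dl_del : forall A : C, T1 (del Bg A) ;; dl (B0 A) ;; B1 (dl A) = dl A ;; del Bg (T0 A);
  dl_eps : forall A : C, dl A ;; eps Bg (T0 A) = T1 (eps Bg A);
  dl_m : forall A B : C,
      cn T (B0 A) (B0 B) ;; (dl A ⊗m dl B) ;; mm Bg (T0 A) (T0 B)
      = T1 (mm Bg A B) ;; dl (A ⊗ B) ;; B1 (cn T A B);
  dl_mK : cnK T ;; mK Bg = T1 (mK Bg) ;; dl unitK ;; B1 (cnK T)
}.

(* A lifting is a functor !~ on X^T with U^T !~ = ! U^T, i.e. it sends an
   algebra (A,nu) to an algebra (!A, bl nu) and an algebra morphism f to !f
   (which must therefore be an algebra morphism), whose structure maps are
   delta_A, eps_A, Delta_A, e_A, m_{A,B}, m_K (which must therefore be algebra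
   morphisms for the lifted / tensor (otimes^n) / unit (K,n_K) algebras).
   The monoidal coalgebra modality axioms of !~ are equations between
   morphisms of X^T, i.e. between their underlying morphisms in X, where they
   are exactly the axioms of (!,...) (U^T is faithful); so no further data
   or conditions are involved. *)
Record BangLifting : Type := MkBangLifting {
  bl : forall {A : C}, Alg A -> Alg (B0 A);
  bl_fun : forall (A B : C) (a : Alg A) (b : Alg B) (f : hom A B),
      alg_mor (proj1_sig a) (proj1_sig b) f ->
      alg_mor (proj1_sig (bl a)) (proj1_sig (bl b)) (B1 f);
  bl_del : forall (A : C) (a : Alg A),
      alg_mor (proj1_sig (bl a)) (proj1_sig (bl (bl a))) (del Bg A);
  bl_eps : forall (A : C) (a : Alg A),
      alg_mor (proj1_sig (bl a)) (proj1_sig a) (eps Bg A);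
  bl_dup : forall (A : C) (a : Alg A),
      alg_mor (proj1_sig (bl a))
              (cn T (B0 A) (B0 A) ;; (proj1_sig (bl a) ⊗m proj1_sig (bl a))) (dup Bg A);
  bl_er : forall (A : C) (a : Alg A),
      alg_mor (proj1_sig (bl a)) (cnK T) (er Bg A);
  (* c is the tensor algebra (A,nu) ⊗^n (B,nu') *)
  bl_m : forall (A B : C) (a : Alg A) (b : Alg B) (c : Alg (A ⊗ B)),
      proj1_sig c = cn T A B ;; (proj1_sig a ⊗m proj1_sig b) ->
      alg_mor (cn T (B0 A) (B0 B) ;; (proj1_sig (bl a) ⊗m proj1_sig (bl b)))
              (proj1_sig (bl c)) (mm Bg A B);
  (* c is the unit algebra (K, n_K) *)
  bl_mK : forall c : Alg unitK, proj1_sig c = cnK T ->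
      alg_mor (cnK T) (proj1_sig (bl c)) (mK Bg)
}.

(* A functor T~ on X^! with U^! T~ = T U^!, sending (A,om) to (TA, tl om) and
   f to Tf, whose structure maps are mu_A, eta_A, n_{A,B}, n_K (which must be
   coalgebra morphisms for the lifted / tensor (otimes^m) / unit (K,m_K)
   coalgebras).  The symmetric comonoidal monad axioms for T~ are equations
   in X^!, i.e. those of T in X (U^! is faithful). *)
Record TLifting : Type := MkTLifting {
  tl : forall {A : C}, Coalg A -> Coalg (T0 A);
  tl_fun : forall (A B : C) (a : Coalg A) (b : Coalg B) (f : hom A B),
      coalg_mor (proj1_sig a) (proj1_sig b) f ->
      coalg_mor (proj1_sig (tl a)) (proj1_sig (tl b)) (T1 f);
  tl_mu : forall (A : C) (a : Coalg A),
      coalg_mor (proj1_sig (tl (tl a))) (proj1_sig (tl a)) (cmu T A);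
  tl_eta : forall (A : C) (a : Coalg A),
      coalg_mor (proj1_sig a) (proj1_sig (tl a)) (ceta T A);
  (* c is the tensor coalgebra (A,om) ⊗^m (B,om') *)
  tl_n : forall (A B : C) (a : Coalg A) (b : Coalg B) (c : Coalg (A ⊗ B)),
      proj1_sig c = (proj1_sig a ⊗m proj1_sig b) ;; mm Bg A B ->
      coalg_mor (proj1_sig (tl c))
                ((proj1_sig (tl a) ⊗m proj1_sig (tl b)) ;; mm Bg (T0 A) (T0 B)) (cn T A B);
  (* c is the unit coalgebra (K, m_K) *)
  tl_nK : forall c : Coalg unitK, proj1_sig c = mK Bg ->
      coalg_mor (proj1_sig (tl c)) (mK Bg) (cnK T)
}.

End Algebras.

Definition in_bijection (X Y : Type) : Prop :=
  exists (f : X -> Y) (g : Y -> X), (forall x, g (f x) = x) /\ (forall y, f (g y) = y).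

(* A distributive law lambda : T! => !T lifts ! to T-algebras by
   (A, nu) |-> (!A, lambda_A ; !nu) and T to !-coalgebras by
   (A, om) |-> (TA, T om ; lambda_A); conversely lambda is recovered from a
   lifting of ! as T!(eta_A) followed by the lifted action on the free algebra
   TA, and from a lifting of T as the lifted coaction on the cofree coalgebra
   !A followed by !T(eps_A).  Each axiom of a lifting is one axiom of lambda,
   except that Delta and e must be algebra morphisms, i.e. lambda must commute
   with Delta and e.  This follows from the monoidal axioms: the tensor of
   !-coalgebras is cartesian, so the coalgebra morphism T(Delta_A) ; n, whose
   two components are identities, is the canonical comultiplication of the
   coalgebra T!A, and lambda_A is a coalgebra morphism T!A -> !TA. *)

From Stdlib Require Import FunctionalExtensionality ProofIrrelevance.

Lemma comp_eq_tail {C : Cat} {X Y Z : C} (f g : hom X Y) (h : hom Y Z) :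
  f = g -> f ;; h = g ;; h.
Proof. intros ->; reflexivity. Qed.

Ltac assoc_r := repeat rewrite comp_assoc.

Ltac specialize_evars H :=
  try unfold coalg_mor, alg_mor in H;
  repeat match type of H with
  | forall _, _ => let H' := fresh in epose proof (H _) as H'; clear H; rename H' into H
  end.

(* Rewriting modulo associativity: both sides are right-associated, and if
   [f ;; g] is not a subterm of the goal, [f ;; (g ;; h) = r ;; h] is tried. *)
Ltac rewrite_assoc H :=
  assoc_r; repeat rewrite comp_assoc in H;
  first [ rewrite H
        | let H' := fresh in epose proof (comp_eq_tail _ _ _ H) as H';
          repeat rewrite comp_assoc in H'; rewrite H'; clear H' ];
  clear H.

Tactic Notation "arewrite" open_constr(E) :=
  let H := fresh in epose proof E as H; specialize_evars H; rewrite_assoc H.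
Tactic Notation "arewrite" "<-" open_constr(E) :=
  let H := fresh in epose proof E as H; specialize_evars H; symmetry in H; rewrite_assoc H.

(** * Coherence in symmetric monoidal categories *)

Section Coherence.
Context {C : Cat} {M : MonData C} {HC : IsCat C} {HM : IsSMC C M}.

Lemma tenm_comp_id_l {X A B D : C} (f : hom A B) (g : hom B D) :
  idm X ⊗m (f ;; g) = (idm X ⊗m f) ;; (idm X ⊗m g).
Proof. rewrite <- tenm_comp, comp_id_l. reflexivity. Qed.

Lemma tenm_comp_id_r {X A B D : C} (f : hom A B) (g : hom B D) :
  (f ;; g) ⊗m idm X = (f ⊗m idm X) ;; (g ⊗m idm X).
Proof. rewrite <- tenm_comp, comp_id_l. reflexivity. Qed.

Lemma tenm_split_snd {A A' B B' : C} (f : hom A A') (g : hom B B') :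
  f ⊗m g = (idm A ⊗m g) ;; (f ⊗m idm B').
Proof. rewrite <- tenm_comp, comp_id_l, comp_id_r. reflexivity. Qed.

Lemma tenm_split_fst {A A' B B' : C} (f : hom A A') (g : hom B B') :
  f ⊗m g = (f ⊗m idm B) ;; (idm A' ⊗m g).
Proof. rewrite <- tenm_comp, comp_id_l, comp_id_r. reflexivity. Qed.

Lemma iso_cancel_l {X Y Z : C} (i : hom X Y) (j : hom Y X) (f g : hom Y Z) :
  j ;; i = idm Y -> i ;; f = i ;; g -> f = g.
Proof.
  intros Hji H.
  rewrite <- (comp_id_l _ _ f), <- (comp_id_l _ _ g), <- Hji, !comp_assoc, H.
  reflexivity.
Qed.

Lemma iso_cancel_r {X Y Z : C} (i : hom Y Z) (j : hom Z Y) (f g : hom X Y) :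
  i ;; j = idm Y -> f ;; i = g ;; i -> f = g.
Proof.
  intros Hij H.
  rewrite <- (comp_id_r _ _ f), <- (comp_id_r _ _ g), <- Hij, <- !comp_assoc, H.
  reflexivity.
Qed.

Lemma unit_tenm_inj_l {A B : C} (f g : hom A B) : idm unitK ⊗m f = idm unitK ⊗m g -> f = g.
Proof.
  intro H. apply (iso_cancel_l (lam A) (lami A)); [apply lam_iso2|].
  rewrite <- !lam_nat, H. reflexivity.
Qed.

Lemma unit_tenm_inj_r {A B : C} (f g : hom A B) : f ⊗m idm unitK = g ⊗m idm unitK -> f = g.
Proof.
  intro H. apply (iso_cancel_l (rho A) (rhoi A)); [apply rho_iso2|].
  rewrite <- !rho_nat, H. reflexivity.
Qed.

Lemma alphai_nat (A A' B B' D D' : C) (f : hom A A') (g : hom B B') (h : hom D D') :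
  (f ⊗m (g ⊗m h)) ;; alphai A' B' D' = alphai A B D ;; ((f ⊗m g) ⊗m h).
Proof.
  apply (iso_cancel_r (alpha A' B' D') (alphai A' B' D')); [apply alpha_iso1|].
  arewrite alpha_iso2. arewrite alpha_nat. arewrite alpha_iso2.
  rewrite comp_id_l, comp_id_r. reflexivity.
Qed.

(* Kelly's redundant unit coherence axiom. *)
Lemma alpha_lam (A B : C) : alpha unitK A B ;; lam (A ⊗ B) = lam A ⊗m idm B.
Proof.
  apply unit_tenm_inj_l.
  apply (iso_cancel_l ((alpha unitK unitK A ⊗m idm B) ;; alpha unitK (unitK ⊗ A) B)
                      (alphai unitK (unitK ⊗ A) B ;; (alphai unitK unitK A ⊗m idm B))).
  { assoc_r. arewrite <- tenm_comp.
    rewrite alpha_iso2, comp_id_l, tenm_id, comp_id_l, alpha_iso2. reflexivity. }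
  rewrite tenm_comp_id_l. arewrite pentagon. arewrite triangle.
  arewrite <- alpha_nat. arewrite <- tenm_comp. rewrite triangle, comp_id_l.
  rewrite <- (tenm_id A B), <- alpha_nat. reflexivity.
Qed.

Lemma lam_unit_ten (X : C) : lam (unitK ⊗ X) = idm unitK ⊗m lam X.
Proof.
  apply (iso_cancel_r (lam X) (lami X)); [apply lam_iso1|].
  rewrite lam_nat. reflexivity.
Qed.

Lemma lam_unit_rho : lam unitK = rho unitK.
Proof. apply unit_tenm_inj_r. rewrite <- alpha_lam, lam_unit_ten, triangle. reflexivity. Qed.

Lemma sig_lam (A : C) : sig A unitK ;; lam A = rho A.
Proof.
  apply unit_tenm_inj_r.
  apply (iso_cancel_r (sig A unitK) (sig unitK A)); [apply sig_inv|].
  rewrite tenm_comp_id_r, <- alpha_lam.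
  arewrite <- lam_nat. arewrite <- hexagon. arewrite alpha_lam.
  arewrite <- (sig_nat A A). arewrite triangle. reflexivity.
Qed.

Lemma sig_unit : sig unitK unitK = idm _.
Proof.
  apply (iso_cancel_r (lam unitK) (lami unitK)); [apply lam_iso1|].
  rewrite sig_lam, comp_id_l, lam_unit_rho. reflexivity.
Qed.

Lemma tenm_slide {A A' B B' D D' : C} (f : hom A A') (g : hom B D) (h : hom D D')
    (g' : hom B B') (h' : hom B' D') :
  g ;; h = g' ;; h' -> (f ⊗m g) ;; (idm A' ⊗m h) = (idm A ⊗m g') ;; (f ⊗m h').
Proof. intro H. rewrite <- !tenm_comp, comp_id_l, comp_id_r, H. reflexivity. Qed.

Lemma tau_nat (A A' B B' D D' E E' : C)
    (f : hom A A') (g : hom B B') (h : hom D D') (k : hom E E') :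
  tau A B D E ;; ((f ⊗m h) ⊗m (g ⊗m k)) = ((f ⊗m g) ⊗m (h ⊗m k)) ;; tau A' B' D' E'.
Proof.
  assert (Hsig : (g ⊗m h) ⊗m k ;; sig B' D' ⊗m idm E'
                 = sig B D ⊗m idm E ;; (h ⊗m g) ⊗m k).
  { rewrite <- !tenm_comp, sig_nat, comp_id_l, comp_id_r. reflexivity. }
  unfold tau. arewrite alpha_nat.
  arewrite (tenm_slide f _ _ _ _ (alphai_nat _ _ _ _ _ _ g h k)).
  arewrite (tenm_slide f _ _ _ _ Hsig).
  arewrite (tenm_slide f _ _ _ _ (alpha_nat _ _ _ _ _ _ h g k)).
  arewrite alphai_nat. reflexivity.
Qed.

Lemma tau_unit (X Y : C) : tau X unitK unitK Y = idm _.
Proof.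
  unfold tau. rewrite sig_unit, !tenm_id, comp_id_r. assoc_r.
  arewrite <- tenm_comp_id_l. rewrite alpha_iso2, tenm_id, comp_id_l, alpha_iso1. reflexivity.
Qed.

End Coherence.

Section Liftings.
Context {C : Cat} {M : MonData C} {HC : IsCat C} {HM : IsSMC C M}
  {T : CMonad C M} {HT : IsSymComonoidalMonad C M T} {Bg : MCM C M} {HB : IsMCM C M Bg}.

Local Notation T0 := (fo (cT T)).
Local Notation T1 := (fm (cT T)).
Local Notation B0 := (fo (bang Bg)).
Local Notation B1 := (fm (bang Bg)).

Lemma T_id (A : C) : T1 (idm A) = idm (T0 A).
Proof. exact (proj1 scm_functor A). Qed.
Lemma T_comp {A B D : C} (f : hom A B) (g : hom B D) : T1 (f ;; g) = T1 f ;; T1 g.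
Proof. exact (proj2 scm_functor _ _ _ f g). Qed.
Lemma B_id (A : C) : B1 (idm A) = idm (B0 A).
Proof. exact (proj1 mcm_functor A). Qed.
Lemma B_comp {A B D : C} (f : hom A B) (g : hom B D) : B1 (f ;; g) = B1 f ;; B1 g.
Proof. exact (proj2 mcm_functor _ _ _ f g). Qed.

(** * Free algebras and cofree coalgebras *)

Lemma alg_unit {A : C} (a : Alg T A) : ceta T A ;; proj1_sig a = idm A.
Proof. exact (proj1 (proj2_sig a)). Qed.

Lemma action_alg_mor {A : C} (a : Alg T A) :
  alg_mor T _ _ (cmu T A) (proj1_sig a) (proj1_sig a).
Proof. exact (proj2 (proj2_sig a)). Qed.

Definition free_alg (A : C) : Alg T (T0 A) := exist _ (cmu T A) (conj (mu_eta_l A) (mu_assoc A)).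

Lemma free_alg_mor {A B : C} (f : hom A B) : alg_mor T _ _ (cmu T A) (cmu T B) (T1 f).
Proof. apply mu_nat. Qed.

Lemma mu_alg_mor (A : C) : alg_mor T _ _ (cmu T (T0 A)) (cmu T A) (cmu T A).
Proof. apply mu_assoc. Qed.

Lemma free_ten_is_alg (A B : C) : is_alg T _ (cn T (T0 A) (T0 B) ;; (cmu T A ⊗m cmu T B)).
Proof.
  split.
  - arewrite eta_n. rewrite <- tenm_comp, !mu_eta_l, tenm_id. reflexivity.
  - rewrite T_comp. arewrite n_nat. arewrite <- tenm_comp. rewrite !mu_assoc, tenm_comp.
    arewrite <- mu_n. reflexivity.
Qed.

Definition free_ten_alg (A B : C) : Alg T (T0 A ⊗ T0 B) := exist _ _ (free_ten_is_alg A B).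

Lemma cn_alg_mor (A B : C) :
  alg_mor T _ _ (cmu T (A ⊗ B)) (cn T (T0 A) (T0 B) ;; (cmu T A ⊗m cmu T B)) (cn T A B).
Proof. unfold alg_mor. rewrite mu_n. assoc_r. reflexivity. Qed.

Definition unit_alg : Alg T unitK := exist _ (cnK T) (conj eta_nK (eq_sym mu_nK)).

Lemma cnK_alg_mor : alg_mor T _ _ (cmu T unitK) (cnK T) (cnK T).
Proof. symmetry. apply mu_nK. Qed.

Lemma coalg_counit {A : C} (a : Coalg Bg A) : proj1_sig a ;; eps Bg A = idm A.
Proof. exact (proj1 (proj2_sig a)). Qed.

Lemma coaction_coalg_mor {A : C} (a : Coalg Bg A) :
  coalg_mor Bg _ _ (proj1_sig a) (del Bg A) (proj1_sig a).
Proof. exact (proj2 (proj2_sig a)). Qed.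

Definition cofree_coalg (A : C) : Coalg Bg (B0 A) :=
  exist _ (del Bg A) (conj (del_eps_l A) (del_coassoc A)).

Lemma cofree_coalg_mor {A B : C} (f : hom A B) : coalg_mor Bg _ _ (del Bg A) (del Bg B) (B1 f).
Proof. apply del_nat. Qed.

Lemma del_coalg_mor (A : C) : coalg_mor Bg _ _ (del Bg A) (del Bg (B0 A)) (del Bg A).
Proof. apply del_coassoc. Qed.

Lemma cofree_ten_is_coalg (A B : C) : is_coalg Bg _ ((del Bg A ⊗m del Bg B) ;; mm Bg _ _).
Proof.
  split.
  - assoc_r. rewrite m_eps, <- tenm_comp, !del_eps_l, tenm_id. reflexivity.
  - assoc_r. rewrite m_del, B_comp, <- (comp_assoc _ _ _ _ (mm Bg _ _)), <- m_nat.
    arewrite <- tenm_comp. arewrite <- tenm_comp. rewrite !del_coassoc. reflexivity.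
Qed.

Definition cofree_ten_coalg (A B : C) : Coalg Bg (B0 A ⊗ B0 B) :=
  exist _ _ (cofree_ten_is_coalg A B).

Lemma mm_coalg_mor (A B : C) :
  coalg_mor Bg _ _ ((del Bg A ⊗m del Bg B) ;; mm Bg _ _) (del Bg (A ⊗ B)) (mm Bg A B).
Proof. apply m_del. Qed.

Definition unit_coalg : Coalg Bg unitK := exist _ (mK Bg) (conj mK_eps mK_del).

Lemma mK_coalg_mor : coalg_mor Bg _ _ (mK Bg) (del Bg unitK) (mK Bg).
Proof. apply mK_del. Qed.

(** * The comonoid structure of a coalgebra *)

Definition coalg_dup {X : C} (om : hom X (B0 X)) : hom X (X ⊗ X) :=
  om ;; dup Bg X ;; (eps Bg X ⊗m eps Bg X).

Definition coalg_er {X : C} (om : hom X (B0 X)) : hom X unitK := om ;; er Bg X.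

Lemma coalg_dup_cofree (A : C) : coalg_dup (del Bg A) = dup Bg A.
Proof.
  unfold coalg_dup. rewrite del_dup. assoc_r.
  rewrite <- tenm_comp, del_eps_l, tenm_id, comp_id_r. reflexivity.
Qed.

Lemma coalg_dup_nat {X Y : C} (om : hom X (B0 X)) (om' : hom Y (B0 Y)) (g : hom X Y) :
  coalg_mor Bg _ _ om om' g -> coalg_dup om ;; (g ⊗m g) = g ;; coalg_dup om'.
Proof.
  intro Hg. unfold coalg_dup.
  arewrite <- tenm_comp. rewrite <- !(eps_nat _ _ g). arewrite tenm_comp.
  arewrite <- dup_nat. arewrite <- Hg. reflexivity.
Qed.

Lemma coalg_dup_coaction {X : C} (om : hom X (B0 X)) :
  is_coalg Bg X om -> coalg_dup om ;; (om ⊗m om) = om ;; dup Bg X.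
Proof.
  intros [_ Hcoassoc].
  rewrite (coalg_dup_nat om (del Bg X) om Hcoassoc), coalg_dup_cofree. reflexivity.
Qed.

Lemma coalg_dup_counit_r {X : C} (om : hom X (B0 X)) :
  is_coalg Bg X om -> coalg_dup om ;; (idm X ⊗m coalg_er om) ;; rho X = idm X.
Proof.
  intro Hom.
  transitivity (om ;; dup Bg X ;; (eps Bg X ⊗m er Bg X) ;; rho X).
  { unfold coalg_er. rewrite <- (proj1 Hom). rewrite tenm_comp.
    arewrite (coalg_dup_coaction om Hom). reflexivity. }
  rewrite (tenm_split_snd (eps Bg X)). arewrite rho_nat. arewrite dup_counit_r.
  rewrite comp_id_l. apply (proj1 Hom).
Qed.

Lemma coalg_dup_counit_l {X : C} (om : hom X (B0 X)) :
  is_coalg Bg X om -> coalg_dup om ;; (coalg_er om ⊗m idm X) ;; lam X = idm X.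
Proof.
  intro Hom.
  transitivity (om ;; dup Bg X ;; (er Bg X ⊗m eps Bg X) ;; lam X).
  { unfold coalg_er. rewrite <- (proj1 Hom). rewrite tenm_comp.
    arewrite (coalg_dup_coaction om Hom). reflexivity. }
  rewrite (tenm_split_fst (er Bg X)). arewrite lam_nat. arewrite dup_counit_l.
  rewrite comp_id_l. apply (proj1 Hom).
Qed.

Lemma coalg_dup_ten {Y Z : C} (omY : hom Y (B0 Y)) (omZ : hom Z (B0 Z)) :
  coalg_dup ((omY ⊗m omZ) ;; mm Bg Y Z) = (coalg_dup omY ⊗m coalg_dup omZ) ;; tau Y Y Z Z.
Proof.
  unfold coalg_dup. arewrite m_dup. arewrite <- tenm_comp. rewrite !m_eps.
  arewrite tau_nat. rewrite !tenm_comp. assoc_r. reflexivity.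
Qed.

(* The tensor of coalgebras is a cartesian product. *)
Lemma coalg_mor_ten_components {X Y Z : C}
    (om : hom X (B0 X)) (omY : hom Y (B0 Y)) (omZ : hom Z (B0 Z)) (g : hom X (Y ⊗ Z)) :
  is_coalg Bg Y omY -> is_coalg Bg Z omZ ->
  coalg_mor Bg _ _ om ((omY ⊗m omZ) ;; mm Bg Y Z) g ->
  coalg_dup om ;; ((g ;; ((idm Y ⊗m coalg_er omZ) ;; rho Y))
                   ⊗m (g ;; ((coalg_er omY ⊗m idm Z) ;; lam Z))) = g.
Proof.
  intros HY HZ Hg.
  rewrite !tenm_comp. arewrite (coalg_dup_nat _ _ _ Hg). rewrite coalg_dup_ten.
  arewrite (tau_nat _ _ _ _ _ _ _ _ (idm Y) (coalg_er omY) (coalg_er omZ) (idm Z)).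
  rewrite tau_unit, comp_id_l. arewrite <- tenm_comp. arewrite <- tenm_comp.
  rewrite <- !comp_assoc, coalg_dup_counit_r, coalg_dup_counit_l, tenm_id; auto.
  apply comp_id_r.
Qed.

(** * From a distributive law to the liftings *)

Section FromDistLaw.
Variable L : DistLaw T Bg.
Local Notation lmb := (dl T Bg L).

Definition lift_coaction {A : C} (om : hom A (B0 A)) : hom (T0 A) (B0 (T0 A)) :=
  T1 om ;; lmb A.

Lemma lift_coaction_is_coalg {A : C} (om : hom A (B0 A)) :
  is_coalg Bg A om -> is_coalg Bg (T0 A) (lift_coaction om).
Proof.
  intros [Hcounit Hcoassoc]. unfold lift_coaction. split.
  - assoc_r. rewrite dl_eps, <- T_comp, Hcounit, T_id. reflexivity.
  - assoc_r. arewrite <- (dl_del _ _ L). arewrite <- T_comp. rewrite Hcoassoc, T_comp.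
    arewrite (dl_nat _ _ L). rewrite (B_comp (T1 om)). reflexivity.
Qed.

Definition lift_coalg {A : C} (a : Coalg Bg A) : Coalg Bg (T0 A) :=
  exist _ _ (lift_coaction_is_coalg _ (proj2_sig a)).

Lemma lift_coaction_mor {A B : C} (om : hom A (B0 A)) (om' : hom B (B0 B)) (f : hom A B) :
  coalg_mor Bg _ _ om om' f -> coalg_mor Bg _ _ (lift_coaction om) (lift_coaction om') (T1 f).
Proof.
  unfold coalg_mor, lift_coaction. intro Hf.
  arewrite <- T_comp. rewrite Hf, T_comp. arewrite (dl_nat _ _ L). reflexivity.
Qed.

Lemma mu_lift_coaction_mor {A : C} (om : hom A (B0 A)) :
  coalg_mor Bg _ _ (lift_coaction (lift_coaction om)) (lift_coaction om) (cmu T A).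
Proof.
  unfold coalg_mor, lift_coaction.
  arewrite <- mu_nat. arewrite (dl_mu _ _ L). rewrite !T_comp. assoc_r. reflexivity.
Qed.

Lemma eta_lift_coaction_mor {A : C} (om : hom A (B0 A)) :
  coalg_mor Bg _ _ om (lift_coaction om) (ceta T A).
Proof.
  unfold coalg_mor, lift_coaction. arewrite <- eta_nat. arewrite (dl_eta _ _ L). reflexivity.
Qed.

Lemma cn_lift_coaction_mor {A B : C} (om1 : hom A (B0 A)) (om2 : hom B (B0 B)) :
  coalg_mor Bg _ _ (lift_coaction ((om1 ⊗m om2) ;; mm Bg A B))
    ((lift_coaction om1 ⊗m lift_coaction om2) ;; mm Bg _ _) (cn T A B).
Proof.
  unfold coalg_mor, lift_coaction.
  rewrite T_comp. arewrite <- (dl_m _ _ L). arewrite n_nat. arewrite <- tenm_comp. reflexivity.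
Qed.

Lemma cnK_lift_coaction_mor : coalg_mor Bg _ _ (lift_coaction (mK Bg)) (mK Bg) (cnK T).
Proof. unfold coalg_mor, lift_coaction. rewrite (dl_mK _ _ L). reflexivity. Qed.

Definition TLifting_of_DistLaw : TLifting T Bg.
Proof.
  refine (MkTLifting T Bg (@lift_coalg) _ _ _ _ _).
  - intros A B a b f. apply lift_coaction_mor.
  - intros A a. apply mu_lift_coaction_mor.
  - intros A a. apply eta_lift_coaction_mor.
  - intros A B a b c E. cbn [proj1_sig lift_coalg]. rewrite E. apply cn_lift_coaction_mor.
  - intros c E. cbn [proj1_sig lift_coalg]. rewrite E. apply cnK_lift_coaction_mor.
Defined.

Lemma dl_er (A : C) : lmb A ;; er Bg (T0 A) = T1 (er Bg A) ;; cnK T.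
Proof.
  assert (HnK : cnK T = T1 (mK Bg) ;; lmb unitK ;; er Bg (T0 unitK)).
  { rewrite <- (er_nat _ _ (cnK T)). arewrite <- (dl_mK _ _ L). rewrite mK_er, comp_id_r.
    reflexivity. }
  rewrite HnK. arewrite <- T_comp. rewrite <- er_coalg, T_comp.
  arewrite (dl_nat _ _ L). rewrite er_nat.
  rewrite <- (er_nat _ _ (lmb A)). arewrite (dl_del _ _ L). rewrite del_er. reflexivity.
Qed.

Lemma dl_coalg_mor (A : C) : coalg_mor Bg _ _ (lift_coaction (del Bg A)) (del Bg (T0 A)) (lmb A).
Proof. unfold coalg_mor, lift_coaction. rewrite <- (dl_del _ _ L). assoc_r. reflexivity. Qed.

Lemma T_dup_cn_coalg_mor (A : C) :
  coalg_mor Bg _ _ (lift_coaction (del Bg A))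
    ((lift_coaction (del Bg A) ⊗m lift_coaction (del Bg A)) ;; mm Bg _ _)
    (T1 (dup Bg A) ;; cn T (B0 A) (B0 A)).
Proof.
  unfold coalg_mor, lift_coaction.
  rewrite tenm_comp. arewrite <- n_nat. arewrite (dl_m _ _ L).
  arewrite <- T_comp. arewrite <- T_comp. rewrite <- dup_coalg, T_comp.
  arewrite (dl_nat _ _ L). rewrite B_comp. reflexivity.
Qed.

Lemma coalg_er_lift_cofree (A : C) :
  coalg_er (lift_coaction (del Bg A)) = T1 (er Bg A) ;; cnK T.
Proof.
  unfold coalg_er, lift_coaction. arewrite dl_er. arewrite <- T_comp. rewrite del_er. reflexivity.
Qed.

Lemma cn_nat_r {A B B' : C} (h : hom B B') :
  cn T A B ;; (idm (T0 A) ⊗m T1 h) = T1 (idm A ⊗m h) ;; cn T A B'.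
Proof. rewrite n_nat, T_id. reflexivity. Qed.

Lemma cn_nat_l {A A' B : C} (h : hom A A') :
  cn T A B ;; (T1 h ⊗m idm (T0 B)) = T1 (h ⊗m idm B) ;; cn T A' B.
Proof. rewrite n_nat, T_id. reflexivity. Qed.

(* [T(Delta_A) ; n] is a coalgebra morphism into the tensor with identity components. *)
Lemma coalg_dup_lift_cofree (A : C) :
  coalg_dup (lift_coaction (del Bg A)) = T1 (dup Bg A) ;; cn T (B0 A) (B0 A).
Proof.
  pose proof (lift_coaction_is_coalg (del Bg A) (proj2_sig (cofree_coalg A))) as Hcoalg.
  assert (Hr : T1 (dup Bg A) ;; cn T _ _
               ;; ((idm _ ⊗m coalg_er (lift_coaction (del Bg A))) ;; rho _) = idm _).
  { rewrite coalg_er_lift_cofree, tenm_comp_id_l. arewrite cn_nat_r. arewrite n_unit_r.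
    arewrite <- T_comp. arewrite <- T_comp. arewrite dup_counit_r. apply T_id. }
  assert (Hl : T1 (dup Bg A) ;; cn T _ _
               ;; ((coalg_er (lift_coaction (del Bg A)) ⊗m idm _) ;; lam _) = idm _).
  { rewrite coalg_er_lift_cofree, tenm_comp_id_r. arewrite cn_nat_l. arewrite n_unit_l.
    arewrite <- T_comp. arewrite <- T_comp. arewrite dup_counit_l. apply T_id. }
  rewrite <- (coalg_mor_ten_components _ _ _ _ Hcoalg Hcoalg (T_dup_cn_coalg_mor A)).
  rewrite Hr, Hl, tenm_id, comp_id_r. reflexivity.
Qed.

Lemma dl_dup (A : C) :
  lmb A ;; dup Bg (T0 A) = T1 (dup Bg A) ;; cn T (B0 A) (B0 A) ;; (lmb A ⊗m lmb A).
Proof.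
  rewrite <- coalg_dup_lift_cofree, (coalg_dup_nat _ _ _ (dl_coalg_mor A)), coalg_dup_cofree.
  reflexivity.
Qed.

Definition lift_action {A : C} (nu : hom (T0 A) A) : hom (T0 (B0 A)) (B0 A) :=
  lmb A ;; B1 nu.

Lemma lift_action_is_alg {A : C} (nu : hom (T0 A) A) :
  is_alg T A nu -> is_alg T (B0 A) (lift_action nu).
Proof.
  intros [Hunit Hassoc]. unfold lift_action. split.
  - arewrite (dl_eta _ _ L). rewrite <- B_comp, Hunit, B_id. reflexivity.
  - rewrite T_comp. arewrite (dl_nat _ _ L). arewrite <- B_comp. rewrite Hassoc, B_comp.
    arewrite <- (dl_mu _ _ L). reflexivity.
Qed.

Definition lift_alg {A : C} (a : Alg T A) : Alg T (B0 A) :=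
  exist _ _ (lift_action_is_alg _ (proj2_sig a)).

Lemma lift_action_mor {A B : C} (nu : hom (T0 A) A) (nu' : hom (T0 B) B) (f : hom A B) :
  alg_mor T _ _ nu nu' f -> alg_mor T _ _ (lift_action nu) (lift_action nu') (B1 f).
Proof.
  unfold alg_mor, lift_action. intro Hf.
  arewrite (dl_nat _ _ L). arewrite <- B_comp. rewrite Hf, B_comp. reflexivity.
Qed.

Lemma del_lift_action_mor {A : C} (nu : hom (T0 A) A) :
  alg_mor T _ _ (lift_action nu) (lift_action (lift_action nu)) (del Bg A).
Proof.
  unfold alg_mor, lift_action.
  arewrite del_nat. arewrite <- (dl_del _ _ L). rewrite B_comp. reflexivity.
Qed.

Lemma eps_lift_action_mor {A : C} (nu : hom (T0 A) A) :
  alg_mor T _ _ (lift_action nu) nu (eps Bg A).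
Proof. unfold alg_mor, lift_action. arewrite eps_nat. arewrite (dl_eps _ _ L). reflexivity. Qed.

Lemma dup_lift_action_mor {A : C} (nu : hom (T0 A) A) :
  alg_mor T _ _ (lift_action nu) (cn T _ _ ;; (lift_action nu ⊗m lift_action nu)) (dup Bg A).
Proof.
  unfold alg_mor, lift_action. arewrite dup_nat. arewrite dl_dup. rewrite tenm_comp. reflexivity.
Qed.

Lemma er_lift_action_mor {A : C} (nu : hom (T0 A) A) :
  alg_mor T _ _ (lift_action nu) (cnK T) (er Bg A).
Proof. unfold alg_mor, lift_action. arewrite er_nat. rewrite dl_er. reflexivity. Qed.

Lemma mm_lift_action_mor {A B : C} (nu1 : hom (T0 A) A) (nu2 : hom (T0 B) B) :
  alg_mor T _ _ (cn T _ _ ;; (lift_action nu1 ⊗m lift_action nu2))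
    (lift_action (cn T A B ;; (nu1 ⊗m nu2))) (mm Bg A B).
Proof.
  unfold alg_mor, lift_action.
  rewrite tenm_comp. assoc_r. rewrite m_nat. arewrite (dl_m _ _ L). rewrite B_comp. reflexivity.
Qed.

Lemma mK_lift_action_mor : alg_mor T _ _ (cnK T) (lift_action (cnK T)) (mK Bg).
Proof. unfold alg_mor, lift_action. rewrite (dl_mK _ _ L). assoc_r. reflexivity. Qed.

Definition BangLifting_of_DistLaw : BangLifting T Bg.
Proof.
  refine (MkBangLifting T Bg (@lift_alg) _ _ _ _ _ _ _).
  - intros A B a b f. apply lift_action_mor.
  - intros A a. apply del_lift_action_mor.
  - intros A a. apply eps_lift_action_mor.
  - intros A a. apply dup_lift_action_mor.
  - intros A a. apply er_lift_action_mor.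
  - intros A B a b c E. cbn [proj1_sig lift_alg]. rewrite E. apply mm_lift_action_mor.
  - intros c E. cbn [proj1_sig lift_alg]. rewrite E. apply mK_lift_action_mor.
Defined.

End FromDistLaw.

(** * From a lifting of [!] to a distributive law *)

Section FromBangLifting.
Variable BL : BangLifting T Bg.
Local Notation lifted_free_alg A := (bl T Bg BL (free_alg A)).
Local Notation lifted_free A := (proj1_sig (lifted_free_alg A)).
Local Notation bl_mor a b Hf := (bl_fun T Bg BL _ _ a b _ Hf).

Definition dl_of_bl (A : C) : hom (T0 (B0 A)) (B0 (T0 A)) :=
  T1 (B1 (ceta T A)) ;; lifted_free A.

Lemma dl_of_bl_nat (A B : C) (f : hom A B) :
  T1 (B1 f) ;; dl_of_bl B = dl_of_bl A ;; B1 (T1 f).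
Proof.
  unfold dl_of_bl. arewrite <- T_comp. arewrite <- B_comp.
  rewrite eta_nat, B_comp, T_comp.
  arewrite (bl_mor (free_alg A) (free_alg B) (free_alg_mor f)). reflexivity.
Qed.

Lemma dl_of_bl_mu (A : C) :
  cmu T (B0 A) ;; dl_of_bl A = T1 (dl_of_bl A) ;; dl_of_bl (T0 A) ;; B1 (cmu T A).
Proof.
  unfold dl_of_bl. arewrite <- mu_nat. arewrite <- (action_alg_mor (lifted_free_alg A)).
  rewrite T_comp. arewrite <- (bl_mor (free_alg (T0 A)) (free_alg A) (mu_alg_mor A)).
  arewrite <- (T_comp (B1 (ceta T (T0 A))) (B1 (cmu T A))). arewrite <- B_comp.
  rewrite mu_eta_l, B_id, T_id, comp_id_l. reflexivity.
Qed.

Lemma dl_of_bl_eta (A : C) : ceta T (B0 A) ;; dl_of_bl A = B1 (ceta T A).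
Proof.
  unfold dl_of_bl. arewrite <- eta_nat. arewrite (alg_unit (lifted_free_alg A)).
  apply comp_id_r.
Qed.

Lemma dl_of_bl_del (A : C) :
  T1 (del Bg A) ;; dl_of_bl (B0 A) ;; B1 (dl_of_bl A) = dl_of_bl A ;; del Bg (T0 A).
Proof.
  unfold dl_of_bl.
  arewrite <- (bl_del _ _ BL _ (free_alg A)).
  arewrite <- (T_comp (B1 (ceta T A)) (del Bg (T0 A))). rewrite del_nat, (T_comp (del Bg A)).
  rewrite (B_comp (T1 (B1 (ceta T A)))).
  arewrite <- (bl_mor (free_alg (B0 A)) (free_alg (B0 (T0 A))) (free_alg_mor (B1 (ceta T A)))).
  arewrite <- (bl_mor (free_alg (B0 (T0 A))) (lifted_free_alg A)
                      (action_alg_mor (lifted_free_alg A))).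
  arewrite <- (T_comp (B1 (T1 (B1 (ceta T A)))) (B1 (lifted_free A))).
  arewrite <- (T_comp (B1 (ceta T (B0 A)))).
  arewrite <- B_comp. arewrite <- B_comp. arewrite <- eta_nat.
  arewrite (alg_unit (lifted_free_alg A)).
  rewrite comp_id_r. reflexivity.
Qed.

Lemma dl_of_bl_eps (A : C) : dl_of_bl A ;; eps Bg (T0 A) = T1 (eps Bg A).
Proof.
  unfold dl_of_bl. arewrite <- (bl_eps _ _ BL _ (free_alg A)).
  arewrite <- (T_comp (B1 (ceta T A)) (eps Bg _)).
  rewrite eps_nat, T_comp. change (proj1_sig (free_alg A)) with (cmu T A).
  arewrite mu_eta_r. apply comp_id_r.
Qed.

Lemma dl_of_bl_m (A B : C) :
  cn T (B0 A) (B0 B) ;; (dl_of_bl A ⊗m dl_of_bl B) ;; mm Bg (T0 A) (T0 B)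
  = T1 (mm Bg A B) ;; dl_of_bl (A ⊗ B) ;; B1 (cn T A B).
Proof.
  unfold dl_of_bl. arewrite <- (bl_mor (free_alg (A ⊗ B)) (free_ten_alg A B) (cn_alg_mor A B)).
  arewrite <- (T_comp (B1 (ceta T (A ⊗ B))) (B1 (cn T A B))). rewrite <- B_comp, eta_n.
  arewrite <- (T_comp (mm Bg A B)). rewrite <- m_nat, T_comp.
  arewrite (bl_m _ _ BL _ _ (free_alg A) (free_alg B) (free_ten_alg A B) eq_refl).
  arewrite n_nat. arewrite <- tenm_comp. reflexivity.
Qed.

Lemma dl_of_bl_mK : cnK T ;; mK Bg = T1 (mK Bg) ;; dl_of_bl unitK ;; B1 (cnK T).
Proof.
  unfold dl_of_bl. arewrite <- (bl_mor (free_alg unitK) unit_alg cnK_alg_mor).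
  arewrite <- (T_comp (B1 (ceta T unitK)) (B1 (cnK T))).
  rewrite <- B_comp, eta_nK, B_id, T_id, comp_id_l.
  rewrite (bl_mK _ _ BL unit_alg eq_refl). reflexivity.
Qed.

Definition DistLaw_of_BangLifting : DistLaw T Bg :=
  MkDistLaw T Bg dl_of_bl dl_of_bl_nat dl_of_bl_mu dl_of_bl_eta dl_of_bl_del dl_of_bl_eps
    dl_of_bl_m dl_of_bl_mK.

End FromBangLifting.

(** * From a lifting of [T] to a distributive law *)

Section FromTLifting.
Variable TL : TLifting T Bg.
Local Notation lifted_cofree_coalg A := (tl T Bg TL (cofree_coalg A)).
Local Notation lifted_cofree A := (proj1_sig (lifted_cofree_coalg A)).
Local Notation tl_mor a b Hf := (tl_fun T Bg TL _ _ a b _ Hf).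

Definition dl_of_tl (A : C) : hom (T0 (B0 A)) (B0 (T0 A)) :=
  lifted_cofree A ;; B1 (T1 (eps Bg A)).

Lemma dl_of_tl_nat (A B : C) (f : hom A B) :
  T1 (B1 f) ;; dl_of_tl B = dl_of_tl A ;; B1 (T1 f).
Proof.
  unfold dl_of_tl. arewrite (tl_mor (cofree_coalg A) (cofree_coalg B) (cofree_coalg_mor f)).
  rewrite <- !B_comp, <- !T_comp, eps_nat. reflexivity.
Qed.

Lemma dl_of_tl_mu (A : C) :
  cmu T (B0 A) ;; dl_of_tl A = T1 (dl_of_tl A) ;; dl_of_tl (T0 A) ;; B1 (cmu T A).
Proof.
  unfold dl_of_tl. arewrite (tl_mu _ _ TL _ (cofree_coalg A)). rewrite T_comp.
  arewrite (tl_mor (cofree_coalg _) (cofree_coalg _) (cofree_coalg_mor (T1 (eps Bg A)))).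
  arewrite (tl_mor (lifted_cofree_coalg A) (cofree_coalg _)
                   (coaction_coalg_mor (lifted_cofree_coalg A))).
  rewrite <- !B_comp. f_equal. f_equal.
  arewrite <- mu_nat. arewrite <- T_comp. arewrite <- T_comp. arewrite eps_nat.
  arewrite coalg_counit. rewrite comp_id_l. reflexivity.
Qed.

Lemma dl_of_tl_eta (A : C) : ceta T (B0 A) ;; dl_of_tl A = B1 (ceta T A).
Proof.
  unfold dl_of_tl. arewrite (tl_eta _ _ TL _ (cofree_coalg A)).
  change (proj1_sig (cofree_coalg A)) with (del Bg A).
  rewrite <- B_comp, <- eta_nat, B_comp. arewrite del_eps_r. apply comp_id_l.
Qed.

Lemma dl_of_tl_del (A : C) :
  T1 (del Bg A) ;; dl_of_tl (B0 A) ;; B1 (dl_of_tl A) = dl_of_tl A ;; del Bg (T0 A).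
Proof.
  unfold dl_of_tl. arewrite (tl_mor (cofree_coalg A) (cofree_coalg _) (del_coalg_mor A)).
  rewrite <- !B_comp. arewrite <- T_comp. rewrite del_eps_l, T_id, comp_id_l.
  rewrite del_nat. arewrite (coaction_coalg_mor (lifted_cofree_coalg A)). rewrite B_comp.
  reflexivity.
Qed.

Lemma dl_of_tl_eps (A : C) : dl_of_tl A ;; eps Bg (T0 A) = T1 (eps Bg A).
Proof. unfold dl_of_tl. assoc_r. rewrite eps_nat. arewrite coalg_counit. apply comp_id_l. Qed.

Lemma dl_of_tl_m (A B : C) :
  cn T (B0 A) (B0 B) ;; (dl_of_tl A ⊗m dl_of_tl B) ;; mm Bg (T0 A) (T0 B)
  = T1 (mm Bg A B) ;; dl_of_tl (A ⊗ B) ;; B1 (cn T A B).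
Proof.
  unfold dl_of_tl. rewrite tenm_comp. arewrite m_nat.
  arewrite (tl_n _ _ TL _ _ (cofree_coalg A) (cofree_coalg B) (cofree_ten_coalg A B) eq_refl).
  arewrite (tl_mor (cofree_ten_coalg A B) (cofree_coalg _) (mm_coalg_mor A B)).
  rewrite <- !B_comp. f_equal. arewrite <- T_comp. rewrite m_eps, n_nat. reflexivity.
Qed.

Lemma dl_of_tl_mK : cnK T ;; mK Bg = T1 (mK Bg) ;; dl_of_tl unitK ;; B1 (cnK T).
Proof.
  unfold dl_of_tl. arewrite (tl_nK _ _ TL unit_coalg eq_refl).
  arewrite (tl_mor unit_coalg (cofree_coalg _) mK_coalg_mor).
  rewrite <- !B_comp. arewrite <- T_comp. rewrite mK_eps, T_id, comp_id_l. reflexivity.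
Qed.

Definition DistLaw_of_TLifting : DistLaw T Bg :=
  MkDistLaw T Bg dl_of_tl dl_of_tl_nat dl_of_tl_mu dl_of_tl_eta dl_of_tl_del dl_of_tl_eps
    dl_of_tl_m dl_of_tl_mK.

End FromTLifting.

(** * The bijections *)

Lemma sig_ext {X : Type} {P : X -> Prop} (p q : {x | P x}) : proj1_sig p = proj1_sig q -> p = q.
Proof. apply eq_sig_hprop. intros; apply proof_irrelevance. Qed.

Lemma DistLaw_ext (L1 L2 : DistLaw T Bg) : (forall A, dl T Bg L1 A = dl T Bg L2 A) -> L1 = L2.
Proof.
  destruct L1 as [d1], L2 as [d2]; cbn; intro H.
  assert (d1 = d2) as <- by (apply functional_extensionality_dep; exact H).
  f_equal; apply proof_irrelevance.
Qed.

Lemma BangLifting_ext (t1 t2 : BangLifting T Bg) :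
  (forall A (a : Alg T A), proj1_sig (bl T Bg t1 a) = proj1_sig (bl T Bg t2 a)) -> t1 = t2.
Proof.
  destruct t1 as [t1], t2 as [t2]; cbn; intro H.
  assert (t1 = t2) as <-.
  { apply functional_extensionality_dep; intro A.
    apply functional_extensionality; intro a. apply sig_ext, H. }
  f_equal; apply proof_irrelevance.
Qed.

Lemma TLifting_ext (t1 t2 : TLifting T Bg) :
  (forall A (a : Coalg Bg A), proj1_sig (tl T Bg t1 a) = proj1_sig (tl T Bg t2 a)) -> t1 = t2.
Proof.
  destruct t1 as [t1], t2 as [t2]; cbn; intro H.
  assert (t1 = t2) as <-.
  { apply functional_extensionality_dep; intro A.
    apply functional_extensionality; intro a. apply sig_ext, H. }
  f_equal; apply proof_irrelevance.
Qed.

Lemma dl_of_bl_of_dl (L : DistLaw T Bg) (A : C) :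
  dl_of_bl (BangLifting_of_DistLaw L) A = dl T Bg L A.
Proof.
  unfold dl_of_bl.
  change (proj1_sig (bl T Bg (BangLifting_of_DistLaw L) (free_alg A)))
    with (lift_action L (cmu T A)).
  unfold lift_action. arewrite (dl_nat _ _ L). arewrite <- B_comp.
  rewrite mu_eta_r, B_id, comp_id_r. reflexivity.
Qed.

Lemma lift_action_of_bl (t : BangLifting T Bg) (A : C) (a : Alg T A) :
  lift_action (DistLaw_of_BangLifting t) (proj1_sig a) = proj1_sig (bl T Bg t a).
Proof.
  unfold lift_action. change (dl T Bg (DistLaw_of_BangLifting t) A) with (dl_of_bl t A).
  unfold dl_of_bl. arewrite <- (bl_fun _ _ t _ _ (free_alg A) a _ (action_alg_mor a)).
  arewrite <- T_comp. arewrite <- B_comp. rewrite alg_unit, B_id, T_id, comp_id_l.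
  reflexivity.
Qed.

Lemma dl_of_tl_of_dl (L : DistLaw T Bg) (A : C) :
  dl_of_tl (TLifting_of_DistLaw L) A = dl T Bg L A.
Proof.
  unfold dl_of_tl.
  change (proj1_sig (tl T Bg (TLifting_of_DistLaw L) (cofree_coalg A)))
    with (lift_coaction L (del Bg A)).
  unfold lift_coaction. arewrite <- (dl_nat _ _ L). arewrite <- T_comp.
  rewrite del_eps_r, T_id, comp_id_l. reflexivity.
Qed.

Lemma lift_coaction_of_tl (t : TLifting T Bg) (A : C) (a : Coalg Bg A) :
  lift_coaction (DistLaw_of_TLifting t) (proj1_sig a) = proj1_sig (tl T Bg t a).
Proof.
  unfold lift_coaction. change (dl T Bg (DistLaw_of_TLifting t) A) with (dl_of_tl t A).
  unfold dl_of_tl.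
  rewrite <- comp_assoc, (tl_fun _ _ t _ _ a (cofree_coalg A) _ (coaction_coalg_mor a)).
  arewrite <- B_comp. arewrite <- T_comp. rewrite coalg_counit, T_id, B_id, comp_id_r.
  reflexivity.
Qed.

Lemma DistLaw_BangLifting_bij : in_bijection (DistLaw T Bg) (BangLifting T Bg).
Proof.
  exists BangLifting_of_DistLaw, DistLaw_of_BangLifting. split.
  - intro L. apply DistLaw_ext, dl_of_bl_of_dl.
  - intro t. apply BangLifting_ext, lift_action_of_bl.
Qed.

Lemma DistLaw_TLifting_bij : in_bijection (DistLaw T Bg) (TLifting T Bg).
Proof.
  exists TLifting_of_DistLaw, DistLaw_of_TLifting. split.
  - intro L. apply DistLaw_ext, dl_of_tl_of_dl.
  - intro t. apply TLifting_ext, lift_coaction_of_tl.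
Qed.

End Liftings.

Theorem proposition6p7 (C : Cat) (M : MonData C) (HC : IsCat C) (HM : IsSMC C M)
    (T : CMonad C M) (HT : IsSymComonoidalMonad C M T)
    (Bg : MCM C M) (HB : IsMCM C M Bg) :
  in_bijection (DistLaw T Bg) (BangLifting T Bg) /\
  in_bijection (DistLaw T Bg) (TLifting T Bg).
Proof. split; [apply DistLaw_BangLifting_bij | apply DistLaw_TLifting_bij]. Qed.
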